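(* Let $f:\mathbb{R}\to\mathbb{R}$ be a differentiable function which is nowhere monotone. Then the set $D_{f'}$ of discontinuity points of its derivative $f'$ is not a closed subset of $\mathbb{R}$.
   Context: A function $f:\mathbb{R}\to\mathbb{R}$ is nowhere monotone if there is no nondegenerate interval $I\subseteq\mathbb{R}$ on which $f$ is monotone (nondecreasing or nonincreasing); equivalently, in every such interval there are points $x_1<y_1$ with $f(x_1)<f(y_1)$ and points $x_2<y_2$ with $f(x_2)>f(y_2)$. *)

From Stdlib Require Import Reals.
From Coquelicot Require Import Coquelicot.
Open Scope R_scope.

Definition monotone_on (f : R -> R) (a b : R) : Prop :=
  (forall x y, a < x -> x <= y -> y < b -> f x <= f y) \/
  (forall x y, a < x -> x <= y -> y < b -> f y <= f x).

(* Every nondegenerate interval contains a nondegenerate open interval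
   (a,b), and monotonicity is inherited by subintervals, so it suffices
   to quantify over open intervals with a < b. *)
Definition nowhere_monotone (f : R -> R) : Prop :=
  forall a b, a < b -> ~ monotone_on f a b.

Definition discont_set (g : R -> R) : R -> Prop :=
  fun x => ~ continuous g x.

(** The derivative of an everywhere differentiable function is the pointwise
    limit of the continuous difference quotients [n (f (x + 1/n) - f x)], so by
    the Baire category theorem it has a point of continuity [x0].  If the set of
    discontinuities of [f'] were closed, [f'] would be continuous on a whole
    interval around [x0].  There either [f'] takes a positive value, and then
    stays positive near it, or [f' <= 0] everywhere; by the mean value theorem
    [f] is monotone on some interval in both cases. *)

From Stdlib Require Import Reals Lra Classical ClassicalEpsilon.
From Coquelicot Require Import Coquelicot.
Open Scope R_scope.

Lemma continuous_R (g : R -> R) (x : R) :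
  continuous g x <->
  forall e, 0 < e -> exists d, 0 < d /\ forall y, Rabs (y - x) < d -> Rabs (g y - g x) < e.
Proof.
  transitivity (continuity_pt g x); [symmetry; apply continuity_pt_filterlim|]. split.
  - intros Hg e He. destruct (Hg e He) as [d [Hd Hgd]].
    exists d. split; [lra|]. intros y Hy.
    destruct (Req_dec y x) as [->|Hyx].
    + rewrite Rminus_diag, Rabs_R0. exact He.
    + apply Hgd. split; [split; [exact I|congruence]|exact Hy].
  - intros Hg e He. destruct (Hg e He) as [d [Hd Hgd]].
    exists d. split; [lra|]. intros y [_ Hy]. exact (Hgd y Hy).
Qed.

Lemma nested_sequence_common_point (s : nat -> R * R) :
  (forall n, fst (s n) < fst (s (S n)) /\ fst (s (S n)) < snd (s (S n))
             /\ snd (s (S n)) < snd (s n)) ->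
  exists x, forall n, fst (s n) < x < snd (s n).
Proof.
  intros Hs.
  assert (Hmono : forall n m, (n <= m)%nat -> fst (s n) <= fst (s m) /\ snd (s m) <= snd (s n)).
  { intros n m Hnm. induction Hnm as [|m _ IH]; [lra|]. destruct (Hs m). lra. }
  assert (Hleft_right : forall n m, fst (s n) < snd (s m)).
  { intros n m. destruct (Nat.le_ge_cases n m) as [h|h];
      destruct (Hmono _ _ h), (Hs m), (Hs n); lra. }
  destruct (completeness (fun y => exists n, y = fst (s n))) as [x [Hub Hlub]].
  - exists (snd (s O)). intros y [n ->]. left. apply Hleft_right.
  - exists (fst (s O)), O. reflexivity.
  - exists x. intros n. destruct (Hs n) as [h1 [_ h3]]. split.
    + apply (Rlt_le_trans _ (fst (s (S n)))); [exact h1|]. apply Hub. now exists (S n).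
    + apply (Rle_lt_trans _ (snd (s (S n)))); [|exact h3].
      apply Hlub. intros y [m ->]. left. apply Hleft_right.
Qed.

Lemma nested_intervals (P : nat -> R -> R -> Prop) (a b : R) : a < b ->
  (forall k a1 b1, a <= a1 -> a1 < b1 -> b1 <= b ->
     exists a2 b2, a1 < a2 /\ a2 < b2 /\ b2 < b1 /\ P k a2 b2) ->
  exists x, a < x < b /\ forall k, exists a' b', a' < x < b' /\ P k a' b'.
Proof.
  intros Hab Hstep.
  set (refines k (p q : R * R) := fst p < fst q /\ fst q < snd q /\ snd q < snd p
                                  /\ P k (fst q) (snd q)).
  set (s := fix s n := match n with
                       | O => (a, b)
                       | S m => epsilon (inhabits (0, 0)) (refines m (s m))
                       end).
  assert (Hnext : forall n, a <= fst (s n) -> fst (s n) < snd (s n) -> snd (s n) <= b ->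
                            refines n (s n) (s (S n))).
  { intros n h1 h2 h3. apply (epsilon_spec (inhabits (0, 0)) (refines n (s n))).
    destruct (Hstep n _ _ h1 h2 h3) as [a2 [b2 H]]. now exists (a2, b2). }
  assert (Hs : forall n, a <= fst (s n) /\ fst (s n) < snd (s n) /\ snd (s n) <= b
                         /\ refines n (s n) (s (S n))).
  { induction n as [|n [h1 [h2 [h3 Hr]]]].
    - simpl. assert (Hr := Hnext O). simpl in Hr. repeat split; try lra; apply Hr; lra.
    - destruct Hr as [r1 [r2 [r3 _]]]. repeat split; try lra; apply Hnext; lra. }
  destruct (nested_sequence_common_point s) as [x Hx].
  { intros n. destruct (Hs n) as [_ [_ [_ [r1 [r2 [r3 _]]]]]]. auto. }
  exists x. split.
  - destruct (Hx (S O)), (Hs O) as [_ [_ [_ [r1 [_ [r3 _]]]]]]. simpl in *. lra.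
  - intros k. exists (fst (s (S k))), (snd (s (S k))). split; [apply Hx|apply (Hs k)].
Qed.

Lemma baire_interval (F : nat -> R -> Prop) :
  (forall x, exists N, F N x) -> (forall N, open (fun x => ~ F N x)) ->
  forall a b, a < b -> exists N a' b', a <= a' /\ a' < b' /\ b' <= b /\
                                      forall y, a' < y < b' -> F N y.
Proof.
  intros Hcover Hclosed a b Hab. apply NNPP. intros Hnone.
  destruct (nested_intervals (fun k a' b' => forall y, a' < y < b' -> ~ F k y) a b Hab)
    as [x [_ Hx]].
  - intros k a1 b1 h1 h2 h3.
    assert (Hy : exists y, a1 < y < b1 /\ ~ F k y).
    { apply NNPP. intros Hall. apply Hnone. exists k, a1, b1. repeat split; try lra.
      intros y Hy. apply NNPP. intros HFy. apply Hall. now exists y. }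
    destruct Hy as [y [Hy HFy]].
    destruct (Hclosed k y HFy) as [d Hd].
    set (e := Rmin d (Rmin (y - a1) (b1 - y)) / 2).
    assert (0 < Rmin d (Rmin (y - a1) (b1 - y)))
      by (apply Rmin_glb_lt; [apply cond_pos|apply Rmin_glb_lt; lra]).
    pose proof (Rmin_l d (Rmin (y - a1) (b1 - y))).
    pose proof (Rmin_r d (Rmin (y - a1) (b1 - y))).
    pose proof (Rmin_l (y - a1) (b1 - y)). pose proof (Rmin_r (y - a1) (b1 - y)).
    exists (y - e), (y + e). unfold e. repeat split; try lra.
    intros z Hz. apply Hd. change (Rabs (z - y) < d). apply Rabs_lt_between. lra.
  - destruct (Hcover x) as [N HN]. destruct (Hx N) as [a' [b' [Hxab HF]]].
    exact (HF x Hxab HN).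
Qed.

Definition cauchy_from (g : nat -> R -> R) (eps : R) (N : nat) (x : R) : Prop :=
  forall m n, (N <= m)%nat -> (N <= n)%nat -> Rabs (g m x - g n x) <= eps.

Definition osc_le (h : R -> R) (a b w : R) : Prop :=
  forall y z, a < y < b -> a < z < b -> Rabs (h y - h z) <= w.

Section PointwiseLimit.

Variables (g : nat -> R -> R) (h : R -> R).
Hypothesis g_cont : forall n x, continuous (g n) x.
Hypothesis g_cvg : forall x, is_lim_seq (fun n => g n x) (h x).

Lemma limit_eps x e : 0 < e -> exists N, forall n, (N <= n)%nat -> Rabs (g n x - h x) < e.
Proof.
  intros He. destruct (proj1 (is_lim_seq_Reals _ _) (g_cvg x) e He) as [N HN].
  exists N. exact HN.
Qed.

Lemma cauchy_from_cover eps : 0 < eps -> forall x, exists N, cauchy_from g eps N x.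
Proof.
  intros Heps x. destruct (limit_eps x (eps / 2)) as [N HN]; [lra|].
  exists N. intros m n hm hn.
  pose proof (proj1 (Rabs_lt_between _ _) (HN m hm)). pose proof (proj1 (Rabs_lt_between _ _) (HN n hn)).
  apply Rabs_le_between. lra.
Qed.

Lemma cauchy_from_compl_open eps N : open (fun x => ~ cauchy_from g eps N x).
Proof.
  intros x Hx.
  assert (exists m n, (N <= m)%nat /\ (N <= n)%nat /\ eps < Rabs (g m x - g n x))
    as [m [n [hm [hn Hgap]]]].
  { apply NNPP. intros Hc. apply Hx. intros m n hm hn. apply Rnot_lt_le. intros Hl.
    apply Hc. now exists m, n. }
  set (e := (Rabs (g m x - g n x) - eps) / 2).
  destruct (proj1 (continuous_R _ x) (g_cont m x) e) as [d1 [hd1 Hd1]]; [unfold e; lra|].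
  destruct (proj1 (continuous_R _ x) (g_cont n x) e) as [d2 [hd2 Hd2]]; [unfold e; lra|].
  exists (mkposreal _ (Rmin_stable_in_posreal (mkposreal _ hd1) (mkposreal _ hd2))).
  intros y Hy Hcy. simpl in Hy. change (Rabs (y - x) < Rmin d1 d2) in Hy.
  pose proof (Hd1 y (Rlt_le_trans _ _ _ Hy (Rmin_l _ _))) as Hm.
  pose proof (Hd2 y (Rlt_le_trans _ _ _ Hy (Rmin_r _ _))) as Hn.
  specialize (Hcy m n hm hn). unfold e in *.
  revert Hgap Hcy Hm Hn. unfold Rabs; repeat destruct Rcase_abs; intros; lra.
Qed.

Lemma cauchy_from_limit eps N x : cauchy_from g eps N x -> Rabs (h x - g N x) <= eps.
Proof.
  intros Hc. apply Rnot_lt_le. intros Hl.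
  destruct (limit_eps x (Rabs (h x - g N x) - eps)) as [M HM]; [lra|].
  specialize (HM (max M N) (Nat.le_max_l _ _)).
  specialize (Hc (max M N) N (Nat.le_max_r _ _) (le_n _)).
  revert Hl HM Hc. unfold Rabs; repeat destruct Rcase_abs; intros; lra.
Qed.

(* On a Baire interval where [g N] is uniformly [eps]-close to [h], the
   continuity of [g N] at one point bounds the oscillation of [h] by [4 eps]. *)
Lemma pointwise_limit_osc_le w : 0 < w -> forall a b, a < b ->
  exists a' b', a < a' /\ a' < b' /\ b' < b /\ osc_le h a' b' w.
Proof.
  intros Hw a b Hab. set (eps := w / 4).
  destruct (baire_interval (cauchy_from g eps) (cauchy_from_cover eps ltac:(unfold eps; lra))
              (cauchy_from_compl_open eps) a b Hab) as [N [a' [b' [h1 [h2 [h3 HF]]]]]].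
  set (c := (a' + b') / 2).
  destruct (proj1 (continuous_R _ c) (g_cont N c) eps) as [d [hd Hd]]; [unfold eps; lra|].
  set (e := Rmin d ((b' - a') / 4) / 2).
  assert (0 < Rmin d ((b' - a') / 4)) by (apply Rmin_glb_lt; lra).
  pose proof (Rmin_l d ((b' - a') / 4)). pose proof (Rmin_r d ((b' - a') / 4)).
  exists (c - e), (c + e). unfold c, e in *. repeat split; try lra.
  intros y z Hy Hz.
  pose proof (proj1 (Rabs_le_between _ _) (cauchy_from_limit _ _ _ (HF y ltac:(lra)))).
  pose proof (proj1 (Rabs_le_between _ _) (cauchy_from_limit _ _ _ (HF z ltac:(lra)))).
  pose proof (proj1 (Rabs_lt_between _ _) (Hd y ltac:(apply Rabs_lt_between; lra))).
  pose proof (proj1 (Rabs_lt_between _ _) (Hd z ltac:(apply Rabs_lt_between; lra))).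
  apply Rabs_le_between. unfold eps in *. lra.
Qed.

Lemma pointwise_limit_continuity_point a b : a < b -> exists x, a < x < b /\ continuous h x.
Proof.
  intros Hab.
  destruct (nested_intervals (fun k a' b' => osc_le h a' b' (/ (INR k + 1))) a b Hab)
    as [x [Hx Hosc]].
  { intros k a1 b1 _ Hab1 _. apply pointwise_limit_osc_le; [|exact Hab1].
    apply Rinv_0_lt_compat. pose proof (pos_INR k). lra. }
  exists x. split; [exact Hx|]. apply continuous_R. intros e He.
  destruct (archimed_cor1 e He) as [k [Hk Hk0]].
  destruct (Hosc k) as [a' [b' [Hxab Hk']]].
  exists (Rmin (x - a') (b' - x)). split; [apply Rmin_glb_lt; lra|].
  intros y Hy. pose proof (Rmin_l (x - a') (b' - x)). pose proof (Rmin_r (x - a') (b' - x)).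
  apply Rabs_lt_between in Hy.
  assert (/ (INR k + 1) < / INR k).
  { apply lt_0_INR in Hk0. apply Rinv_lt_contravar; [apply Rmult_lt_0_compat|]; lra. }
  pose proof (Hk' y x ltac:(lra) ltac:(lra)). lra.
Qed.

End PointwiseLimit.

Lemma difference_quotient_continuous (f : R -> R) (d : R) :
  (forall x, continuous f x) -> forall x, continuous (fun y => (f (y + d) - f y) / d) x.
Proof.
  intros Hf x.
  apply (continuous_mult (fun y => f (y + d) - f y) (fun _ => / d)); [|apply continuous_const].
  apply (continuous_minus (fun y => f (y + d)) f); [|apply Hf].
  apply (continuous_comp (fun y => y + d) f); [|apply Hf].
  apply (continuous_plus (fun y => y) (fun _ => d)); [apply continuous_id|apply continuous_const].
Qed.

Lemma difference_quotient_cvg_Derive (f : R -> R) (x : R) : ex_derive f x ->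
  is_lim_seq (fun n => (f (x + / (INR n + 1)) - f x) / / (INR n + 1)) (Derive f x).
Proof.
  intros Hd. apply is_lim_seq_Reals. intros e He.
  destruct (proj1 (is_derive_Reals _ _ _) (Derive_correct f x Hd) e He) as [delta Hdelta].
  destruct (archimed_cor1 delta (cond_pos delta)) as [N [HN HN0]].
  exists N. intros n Hn. apply le_INR in Hn. apply lt_0_INR in HN0.
  assert (/ (INR n + 1) < / INR N)
    by (apply Rinv_lt_contravar; [apply Rmult_lt_0_compat|]; lra).
  assert (0 < / (INR n + 1)) by (apply Rinv_0_lt_compat; lra).
  apply Hdelta; [lra|]. rewrite Rabs_right; lra.
Qed.

Lemma Derive_continuity_point (f : R -> R) : (forall x, ex_derive f x) ->
  forall a b, a < b -> exists x, a < x < b /\ continuous (Derive f) x.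
Proof.
  intros Hd. apply (pointwise_limit_continuity_point
                      (fun n y => (f (y + / (INR n + 1)) - f y) / / (INR n + 1))).
  - intros n. apply difference_quotient_continuous.
    intros x. exact (ex_derive_continuous f x (Hd x)).
  - intros x. exact (difference_quotient_cvg_Derive f x (Hd x)).
Qed.

Lemma MVT_Derive (f : R -> R) (x y : R) : (forall z, ex_derive f z) -> x < y ->
  exists c, x <= c <= y /\ f y - f x = Derive f c * (y - x).
Proof.
  intros Hd Hxy.
  destruct (MVT_gen f x y (Derive f)) as [c [Hc Heq]].
  - intros z _. apply Derive_correct, Hd.
  - intros z _. apply continuity_pt_filterlim. exact (ex_derive_continuous f z (Hd z)).
  - rewrite Rmin_left, Rmax_right in Hc by lra. now exists c.
Qed.

Lemma monotone_on_Derive_nonneg (f : R -> R) (a b : R) : (forall x, ex_derive f x) ->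
  (forall x, a < x < b -> 0 <= Derive f x) -> monotone_on f a b.
Proof.
  intros Hd Hpos. left. intros x y Hx Hxy Hy.
  destruct (Req_dec x y) as [->|Hne]; [lra|].
  destruct (MVT_Derive f x y Hd) as [c [Hc Heq]]; [lra|].
  pose proof (Hpos c ltac:(lra)). nra.
Qed.

Lemma monotone_on_Derive_nonpos (f : R -> R) (a b : R) : (forall x, ex_derive f x) ->
  (forall x, a < x < b -> Derive f x <= 0) -> monotone_on f a b.
Proof.
  intros Hd Hneg. right. intros x y Hx Hxy Hy.
  destruct (Req_dec x y) as [->|Hne]; [lra|].
  destruct (MVT_Derive f x y Hd) as [c [Hc Heq]]; [lra|].
  pose proof (Hneg c ltac:(lra)). nra.
Qed.

Lemma monotone_on_of_continuous_Derive (f : R -> R) (a b : R) :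
  (forall x, ex_derive f x) -> a < b ->
  (forall x, a < x < b -> continuous (Derive f) x) ->
  exists a' b', a' < b' /\ monotone_on f a' b'.
Proof.
  intros Hd Hab Hcont.
  destruct (classic (exists y, a < y < b /\ 0 < Derive f y)) as [[y [Hy Hpos]]|Hnone].
  - destruct (proj1 (continuous_R _ y) (Hcont y Hy) _ Hpos) as [d [Hd0 Hnear]].
    exists (y - d), (y + d). split; [lra|].
    apply monotone_on_Derive_nonneg; [exact Hd|]. intros x Hx.
    assert (Hxy : Rabs (x - y) < d) by (apply Rabs_lt_between; lra).
    pose proof (proj1 (Rabs_lt_between _ _) (Hnear x Hxy)). lra.
  - exists a, b. split; [exact Hab|]. apply monotone_on_Derive_nonpos; [exact Hd|].
    intros x Hx. apply Rnot_lt_le. intros Hpos. apply Hnone. now exists x.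
Qed.

Theorem mainTheorem8 (f : R -> R) :
  (forall x, ex_derive f x) ->
  nowhere_monotone f ->
  ~ closed (discont_set (Derive f)).
Proof.
  intros Hd Hnm Hclosed.
  destruct (Derive_continuity_point f Hd 0 1 Rlt_0_1) as [x0 [_ Hx0]].
  assert (Hcont_near : locally x0 (fun y => ~ discont_set (Derive f) y))
    by (apply (open_not _ Hclosed); exact (fun H => H Hx0)).
  destruct Hcont_near as [eps Heps].
  assert (Hcont : forall y, x0 - eps < y < x0 + eps -> continuous (Derive f) y).
  { intros y Hy. apply NNPP, Heps. change (Rabs (y - x0) < eps). apply Rabs_lt_between. lra. }
  destruct (monotone_on_of_continuous_Derive f (x0 - eps) (x0 + eps) Hd
              ltac:(pose proof (cond_pos eps); lra) Hcont) as [a [b [Hab Hmono]]].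
  exact (Hnm a b Hab Hmono).
Qed.
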